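(* Let $p$ be a prime and $k,\ell$ integers with $k>0$, $\ell\ge0$; put $q=p^k$ and $Q=p^{\ell}$. Let $\Gamma$ be the set of roots in $\mathbb{F}_{q^3}$ of $X^{q^2}+X^q+X$. Then the polynomial $(X^q-X)\circ X^{Q+1}=X^{q(Q+1)}-X^{Q+1}$ permutes $\Gamma$ (i.e. maps $\Gamma$ bijectively onto $\Gamma$) if and only if $\gcd(q-1,Q+1)=1$, or equivalently, if and only if $p=2$ and $\operatorname{ord}_2(k)\le\operatorname{ord}_2(\ell)$.
   Context: For a nonzero integer $N$, $\operatorname{ord}_2(N)$ is the largest integer $s\ge0$ with $2^s\mid N$, and $\operatorname{ord}_2(0)=\infty$. *)

From HB Require Import structures.
From mathcomp Require Import all_boot all_order all_algebra all_field.
Set Implicit Arguments. Unset Strict Implicit. Unset Printing Implicit Defensive.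
Import GRing.Theory.
Local Open Scope ring_scope.

(* 2-adic valuation with ord_2(0) = infinity, encoded as None. *)
Definition ord2 (n : nat) : option nat :=
  if n == 0%N then None else Some (logn 2 n).

Definition ole (a b : option nat) : bool :=
  match b with
  | None => true
  | Some b' => match a with None => false | Some a' => (a' <= b')%N end
  end.

Definition Gamma (F : finFieldType) (q : nat) : {set F} :=
  [set x : F | x ^+ (q ^ 2) + x ^+ q + x == 0].

Definition permutes_set (T : finType) (f : T -> T) (A : {set T}) : Prop :=
  {in A, forall x, f x \in A} /\ {in A &, injective f}.

From HB Require Import structures.
From mathcomp Require Import all_boot all_order all_algebra all_field.
From mathcomp Require Import ring zify.
From mathcomp Require cyclic.
Import GRing.Theory.
Local Open Scope ring_scope.

(* The polynomial is f = T o X^(Q+1) with T(u) = u^q - u. Since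
   T(u)^(q^2) + T(u)^q + T(u) = u^(q^3) - u = 0, f maps F_(q^3) into Gamma, so
   f permutes Gamma iff it is injective on Gamma.
   If g = gcd(q-1, Q+1) > 1, an element z of order g lies in F_q and satisfies
   z^(Q+1) = 1; as Gamma is an F_q-space, x and z x have the same image for any
   nonzero x in Gamma.
   If g = 1, then p = 2 and ord_2 k <= ord_2 l, so Q^j is a power of q^3 for
   some odd j. Hence w^(Q+1) = 1 forces w^2 = w^(Q^j + 1) = 1, i.e. w = 1, and
   u^(Q+1) in F_q forces u in F_q. Let x, y in Gamma with x^(Q+1) + y^(Q+1) in
   F_q, and let D = x y^q - x^q y (in F_q) be their Moore determinant. If D = 0
   then y = l x with l in F_q, and since Gamma meets F_q only in 0 this gives
   l^(Q+1) = 1, i.e. x = y. If D <> 0, then x^Q = a y^q + b y and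
   y^Q = a x^q + b x with a, b in F_q; this shape survives z |-> z^Q with the
   roles of x and y swapped, so after j steps x and y are such combinations of
   each other, which forces D = 0. *)

Set Implicit Arguments. Unset Strict Implicit.

Lemma dvdn_succ_pred_sqr m : (m.+1 %| (m ^ 2).-1)%N.
Proof. by case: m => [|m] //; apply/dvdnP; exists m; nia. Qed.

Lemma dvdn_succ_expn_odd m o : odd o -> (m.+1 %| m ^ o + 1)%N.
Proof.
case: m => [_|m o_odd]; first exact: dvd1n.
have sq1 : (m.+1 ^ 2 = 1 %[mod m.+2])%N.
  by apply/eqP; rewrite eqn_mod_dvd ?expn_gt0 // subn1 dvdn_succ_pred_sqr.
rewrite -(odd_double_half o) o_odd add1n expnS -mul2n expnM /dvdn.
by rewrite -modnDml -modnMmr -modnXm sq1 modnXm exp1n muln1 modnDml addn1 modnn.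
Qed.

Lemma odd_cofactor_dvdn k l : (0 < k)%N -> ole (ord2 k) (ord2 l) ->
  exists2 j, odd j & (k %| l * j)%N.
Proof.
move=> k_gt0; rewrite /ord2 (negbTE (lt0n_neq0 k_gt0)).
have [j j_odd def_k] := pfactor_coprime (isT : prime 2) k_gt0.
rewrite coprime2n in j_odd.
case: eqP => [-> _ | /eqP l_neq0 /= le_kl]; exists j => //.
by rewrite {1}def_k mulnC dvdn_pmul2r ?odd_gt0 // pfactor_dvdn ?lt0n.
Qed.

Lemma gcdn_pred_expn_succ_eq1 p k l : prime p -> (0 < k)%N ->
  gcdn (p ^ k - 1) (p ^ l + 1) = 1%N <-> p = 2%N /\ ole (ord2 k) (ord2 l).
Proof.
move=> p_pr k_gt0; split=> [g1 | [-> le_kl]].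
  have p2 : p = 2%N.
    case: (even_prime p_pr) => // p_odd; move: (dvdn_gcd 2 (p ^ k - 1) (p ^ l + 1)).
    by rewrite g1 !dvdn2 oddD oddB ?expn_gt0 ?prime_gt0 // !oddX p_odd !orbT.
  split=> //; subst p; rewrite /ord2 (negbTE (lt0n_neq0 k_gt0)).
  case: eqP => [// | /eqP l_neq0] /=; rewrite leqNgt; apply/negP => lt_lk.
  have l_gt0 : (0 < l)%N by rewrite lt0n.
  have [o o_odd def_l] := pfactor_coprime (isT : prime 2) l_gt0.
  rewrite coprime2n in o_odd.
  have /dvdnP[k' def_k] : (2 ^ (logn 2 l).+1 %| k)%N by rewrite pfactor_dvdn.
  pose m := (2 ^ 2 ^ logn 2 l)%N.
  have dvd_k : (m.+1 %| 2 ^ k - 1)%N.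
    have -> : (2 ^ k = (m ^ 2) ^ k')%N by rewrite def_k -!expnM expnS; congr (2 ^ _)%N; ring.
    by rewrite subn1 (dvdn_trans (dvdn_succ_pred_sqr m)) ?dvdn_pred_predX.
  have dvd_l : (m.+1 %| 2 ^ l + 1)%N.
    by rewrite def_l mulnC expnM dvdn_succ_expn_odd.
  move: (dvdn_gcd m.+1 (2 ^ k - 1) (2 ^ l + 1)); rewrite g1 dvd_k dvd_l dvdn1.
  by rewrite eqSS expn_eq0.
have [j j_odd /dvdnP[m def_lj]] := odd_cofactor_dvdn k_gt0 le_kl.
set g := gcdn _ _.
have g_pow_pred : (g %| (2 ^ (l * j)).-1)%N.
  by rewrite def_lj mulnC expnM (dvdn_trans (dvdn_gcdl _ _)) // subn1 dvdn_pred_predX.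
have g_pow_succ : (g %| 2 ^ (l * j) + 1)%N.
  by rewrite expnM (dvdn_trans (dvdn_gcdr _ _)) // addn1 dvdn_succ_expn_odd.
have g2 : (g %| 2)%N.
  have -> : 2%N = (2 ^ (l * j) + 1 - (2 ^ (l * j)).-1)%N by have := expn_gt0 2 (l * j); lia.
  exact: dvdn_sub.
have odd_pred : coprime 2 (2 ^ k - 1).
  by rewrite coprime2n oddB ?expn_gt0 // oddX orbF eqn0Ngt k_gt0.
by apply/eqP; rewrite -dvdn1 -(eqP odd_pred) dvdn_gcd g2 dvdn_gcdl.
Qed.

Lemma pchar_nat_expn (R : nzRingType) p n : p \in [pchar R] -> [pchar R].-nat (p ^ n)%N.
Proof. by move=> pR; rewrite (eq_pnat _ (pcharf_eq pR)) pnatX pnat_id ?(pcharf_prime pR). Qed.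

Lemma exprBn_pchar (R : comNzRingType) n (a b : R) : [pchar R].-nat n ->
  (a - b) ^+ n = a ^+ n - b ^+ n.
Proof. by move=> nR; rewrite exprDn_pchar // exprNn_pchar. Qed.

Section CharTwo.

Variables (F : fieldType) (q Q j : nat).
Hypotheses (F2 : 2 \in [pchar F]) (qF : [pchar F].-nat q) (QF : [pchar F].-nat Q).
Hypothesis expq3 : forall a : F, a ^+ (q ^ 3) = a.
Hypotheses (j_odd : odd j) (expQj : forall a : F, a ^+ (Q ^ j) = a).

Let q_gt0 : (0 < q)%N. Proof. by case/andP: qF. Qed.
Let exprqD (a b : F) : (a + b) ^+ q = a ^+ q + b ^+ q := exprDn_pchar a b qF.
Let exprQD (a b : F) : (a + b) ^+ Q = a ^+ Q + b ^+ Q := exprDn_pchar a b QF.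
Let exprq3 (a : F) : a ^+ q ^+ q ^+ q = a. Proof. by rewrite -!exprM mulnn -expnS expq3. Qed.

Let addrr2 (a : F) : a + a = 0 := addrr_pchar2 F2 a.
Let oppr2 (a : F) : - a = a := oppr_pchar2 F2 a.

Lemma expSQ_eq1 (w : F) : w ^+ Q.+1 = 1 -> w = 1.
Proof.
move=> wQ1; have ww1 : w * w = 1.
  have /dvdnP[m def_m] := dvdn_succ_expn_odd Q j_odd.
  by rewrite -{1}[w]expQj -exprSr -addn1 def_m mulnC exprM wQ1 expr1n.
have : (w - 1) ^+ 2 = w * w - 1 + ((1 - w) + (1 - w)) by ring.
by rewrite ww1 subrr addrr2 addr0 => /eqP; rewrite expf_eq0 subr_eq0 => /eqP.
Qed.

Lemma fixed_of_expSQ_fixed (u : F) : (u ^+ Q.+1) ^+ q = u ^+ Q.+1 -> u ^+ q = u.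
Proof.
move=> uQq; have [-> | u_neq0] := eqVneq u 0; first by rewrite expr0n gtn_eqF.
have uQ_neq0 : u ^+ Q.+1 != 0 by rewrite expf_neq0.
suff /expSQ_eq1 uq1 : (u ^+ q / u) ^+ Q.+1 = 1 by rewrite -[LHS](divfK u_neq0) uq1 mul1r.
by rewrite exprMn exprVn exprAC uQq divff.
Qed.

Lemma Gamma_fixed_eq0 (x : F) : x ^+ q ^+ q = x ^+ q + x -> x ^+ q = x -> x = 0.
Proof. by move=> + xq; rewrite !xq => xG; apply: (addrI x); rewrite -xG addr0. Qed.

(* The Moore determinant: for x != 0 it vanishes iff y / x is fixed by z |-> z^q. *)
Definition qdet (x y : F) := x * y ^+ q - x ^+ q * y.

Lemma qdetC (x y : F) : qdet y x = qdet x y.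
Proof. by rewrite -[RHS]oppr2 /qdet; ring. Qed.

Lemma qdet_fixed (x y : F) : x ^+ q ^+ q = x ^+ q + x -> y ^+ q ^+ q = y ^+ q + y ->
  qdet x y ^+ q = qdet x y.
Proof.
move=> xG yG; rewrite -[RHS]oppr2 /qdet exprBn_pchar // !exprMn xG yG.
by set xq := x ^+ q; set yq := y ^+ q; ring.
Qed.

Lemma qdet_eq0_Gamma_eq (x y : F) :
  x ^+ q ^+ q = x ^+ q + x -> y ^+ q ^+ q = y ^+ q + y ->
  (x ^+ Q.+1 + y ^+ Q.+1) ^+ q = x ^+ Q.+1 + y ^+ Q.+1 -> qdet x y = 0 -> x = y.
Proof.
move=> xG yG cq /subr0_eq xyq.
have [x0 | x_neq0] := eqVneq x 0.
  rewrite x0 expr0n add0r in cq.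
  by rewrite x0 (Gamma_fixed_eq0 yG (fixed_of_expSQ_fixed cq)).
pose l := y / x; have def_y : y = l * x by rewrite divfK.
have lq : l ^+ q = l.
  by apply/eqP; rewrite exprMn exprVn eqr_div ?expf_neq0 // mulrC xyq mulrC.
have [l1 | l_neq1] := eqVneq (l ^+ Q.+1) 1; first by rewrite def_y (expSQ_eq1 l1) mul1r.
have n_neq0 : 1 + l ^+ Q.+1 != 0 by rewrite addr_eq0 oppr2 eq_sym.
have def_xQ : x ^+ Q.+1 = (x ^+ Q.+1 + y ^+ Q.+1) / (1 + l ^+ Q.+1).
  by rewrite def_y exprMn -{2}[x ^+ Q.+1]mul1r -mulrDl mulrC mulKf.
have /fixed_of_expSQ_fixed xq : (x ^+ Q.+1) ^+ q = x ^+ Q.+1.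
  by rewrite def_xQ exprMn exprVn cq exprqD expr1n exprAC lq.
by move: x_neq0; rewrite (Gamma_fixed_eq0 xG xq) eqxx.
Qed.

Lemma expQ_mul_qdet (x y : F) : x ^+ Q * qdet x y =
  (x ^+ Q.+1 + y ^+ Q.+1) * y ^+ q + (x ^+ Q * x ^+ q + y ^+ Q * y ^+ q) * y.
Proof.
rewrite -[LHS]addr0 -(addrr2 (x ^+ Q * x ^+ q * y + y ^+ Q * y * y ^+ q)) /qdet !exprSr.
by set xq := x ^+ q; set yq := y ^+ q; set xQ := x ^+ Q; set yQ := y ^+ Q; ring.
Qed.

Lemma Gamma_expQ (u : F) : u ^+ q ^+ q = u ^+ q + u -> u ^+ Q ^+ q ^+ q = u ^+ Q ^+ q + u ^+ Q.
Proof. by move=> uG; rewrite !(exprAC _ Q) uG exprQD. Qed.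

Lemma comb_eq0_qdet (A B x y : F) : A * y ^+ q + B * y = 0 -> A * x ^+ q + B * x = 0 ->
  qdet x y != 0 -> A = 0 /\ B = 0.
Proof.
move=> Ey Ex D_neq0.
have AD : A * qdet x y = x * (A * y ^+ q + B * y) - y * (A * x ^+ q + B * x).
  by rewrite /qdet; set xq := x ^+ q; set yq := y ^+ q; ring.
have BD : B * qdet x y = y ^+ q * (A * x ^+ q + B * x) - x ^+ q * (A * y ^+ q + B * y).
  by rewrite /qdet; set xq := x ^+ q; set yq := y ^+ q; ring.
rewrite Ey Ex !mulr0 subrr in AD BD.
by split; apply/eqP; [move/eqP: AD | move/eqP: BD]; rewrite mulf_eq0 (negbTE D_neq0) orbF.
Qed.

Lemma frob_coef_comb_eq0 (u v c s D : F) :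
  u ^+ q ^+ q = u ^+ q + u -> v ^+ q ^+ q = v ^+ q + v -> D ^+ q = D -> c ^+ q = c ->
  u ^+ Q * D = c * v ^+ q + s * v ->
  (s ^+ q ^+ q - s ^+ q) * v ^+ q + (s ^+ q ^+ q - s) * v = 0.
Proof.
move=> uG vG Dq cq uQD.
have uQD1 : u ^+ Q ^+ q * D = c * (v ^+ q + v) + s ^+ q * v ^+ q.
  by have := congr1 (fun z => z ^+ q) uQD; rewrite /= exprqD !exprMn Dq cq vG.
have uQD2 : u ^+ Q ^+ q ^+ q * D = c * v + s ^+ q ^+ q * (v ^+ q + v).
  by have := congr1 (fun z => z ^+ q ^+ q) uQD; rewrite /= !exprqD !exprMn !Dq !cq exprq3 vG.
rewrite Gamma_expQ // mulrDl uQD1 uQD in uQD2.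
move: uQD2; set vq := v ^+ q; set s1 := s ^+ q; set s2 := s1 ^+ q => uQD2.
have -> : (s2 - s1) * vq + (s2 - s) * v = c * v + s2 * (vq + v)
    - (c * (vq + v) + s1 * vq + (c * vq + s * v)) + (c * vq + c * vq) by ring.
by rewrite uQD2 subrr addrr2 add0r.
Qed.

Lemma fixed_expQ_comb (al be a b : F) : al ^+ q = al -> be ^+ q = be -> a ^+ q = a -> b ^+ q = b ->
  (al ^+ Q * a + be ^+ Q * b) ^+ q = al ^+ Q * a + be ^+ Q * b.
Proof. by move=> alq beq aq bq; rewrite exprqD !exprMn !(exprAC _ Q) alq beq aq bq. Qed.

Lemma expQ_comb (u v a b al be : F) :
  v ^+ q ^+ q = v ^+ q + v -> a ^+ q = a -> b ^+ q = b -> u ^+ Q = a * v ^+ q + b * v ->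
  (al * u ^+ q + be * u) ^+ Q =
    (al ^+ Q * (a + b) + be ^+ Q * a) * v ^+ q + (al ^+ Q * a + be ^+ Q * b) * v.
Proof.
move=> vG aq bq uQ; rewrite exprQD !exprMn exprAC uQ exprqD !exprMn aq bq vG.
by set vq := v ^+ q; ring.
Qed.

Lemma expQn_comb (x y a b : F) :
  x ^+ q ^+ q = x ^+ q + x -> y ^+ q ^+ q = y ^+ q + y -> a ^+ q = a -> b ^+ q = b ->
  x ^+ Q = a * y ^+ q + b * y -> y ^+ Q = a * x ^+ q + b * x ->
  forall i, exists al be : F, [/\ al ^+ q = al, be ^+ q = be,
    x ^+ (Q ^ i) = al * (if odd i then y else x) ^+ q + be * (if odd i then y else x) &
    y ^+ (Q ^ i) = al * (if odd i then x else y) ^+ q + be * (if odd i then x else y)].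
Proof.
move=> xG yG aq bq xQ yQ; elim=> [|i [al [be [alq beq xQi yQi]]]].
  by exists 0, 1; rewrite expr0n gtn_eqF // expr1n !expr1 !mul0r !add0r !mul1r.
have abq : (a + b) ^+ q = a + b by rewrite exprqD aq bq.
exists (al ^+ Q * (a + b) + be ^+ Q * a), (al ^+ Q * a + be ^+ Q * b).
rewrite !expnSr !exprM xQi yQi /=; split; try exact: fixed_expQ_comb.
all: by case: (odd i) => /=; apply: expQ_comb.
Qed.

Lemma swap_comb_sq (u v al be : F) :
  v ^+ q ^+ q = v ^+ q + v -> al ^+ q = al -> be ^+ q = be ->
  u = al * v ^+ q + be * v -> v = al * u ^+ q + be * u ->
  al ^+ 2 * v ^+ q = (1 + al ^+ 2 + be ^+ 2) * v.
Proof.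
move=> vG alq beq def_u def_v.
have uq : u ^+ q = al * (v ^+ q + v) + be * v ^+ q by rewrite def_u exprqD !exprMn alq beq vG.
move: def_v; rewrite uq {1}def_u; set vq := v ^+ q => def_v; apply/subr0_eq.
pose t := - (al ^+ 2 * v + be ^+ 2 * v + al * be * vq).
have -> : al ^+ 2 * vq - (1 + al ^+ 2 + be ^+ 2) * v =
  al * (al * (vq + v) + be * vq) + be * (al * vq + be * v) - v + (t + t).
  by rewrite /t; ring.
by rewrite -def_v subrr add0r addrr2.
Qed.

Lemma qdet_eq0_of_swap (x y al be : F) :
  x ^+ q ^+ q = x ^+ q + x -> y ^+ q ^+ q = y ^+ q + y -> al ^+ q = al -> be ^+ q = be ->
  x = al * y ^+ q + be * y -> y = al * x ^+ q + be * x -> qdet x y = 0.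
Proof.
move=> xG yG alq beq def_x def_y.
have [al0 | al_neq0] := eqVneq al 0.
  by rewrite /qdet def_x al0 mul0r add0r exprMn beq; set yq := y ^+ q; ring.
have alyq := swap_comb_sq yG alq beq def_x def_y.
have alxq := swap_comb_sq xG alq beq def_y def_x.
have : al ^+ 2 * qdet x y = 0.
  have -> : al ^+ 2 * qdet x y = x * (al ^+ 2 * y ^+ q) - al ^+ 2 * x ^+ q * y.
    by rewrite /qdet; set xq := x ^+ q; set yq := y ^+ q; ring.
  by rewrite alyq alxq; ring.
by move/eqP; rewrite mulf_eq0 expf_eq0 (negbTE al_neq0) andbF => /eqP.
Qed.

Lemma fixed_add_of_sub_expr_eq (X Y : F) : X ^+ q - X = Y ^+ q - Y -> (X + Y) ^+ q = X + Y.
Proof.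
move=> XY; apply/subr0_eq; rewrite exprqD.
have -> : X ^+ q + Y ^+ q - (X + Y) = X ^+ q - X - (Y ^+ q - Y) + ((Y ^+ q - Y) + (Y ^+ q - Y)).
  by set Xq := X ^+ q; set Yq := Y ^+ q; ring.
by rewrite XY subrr addrr2 addr0.
Qed.

Lemma Gamma_expSQ_inj (x y : F) :
  x ^+ q ^+ q = x ^+ q + x -> y ^+ q ^+ q = y ^+ q + y ->
  x ^+ (q * Q.+1) - x ^+ Q.+1 = y ^+ (q * Q.+1) - y ^+ Q.+1 -> x = y.
Proof.
rewrite !(mulnC q) !exprM => xG yG /fixed_add_of_sub_expr_eq cq.
have [D0 | D_neq0] := eqVneq (qdet x y) 0; first exact: qdet_eq0_Gamma_eq.
set c := x ^+ Q.+1 + y ^+ Q.+1 in cq; set s := x ^+ Q * x ^+ q + y ^+ Q * y ^+ q.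
have xQD : x ^+ Q * qdet x y = c * y ^+ q + s * y := expQ_mul_qdet x y.
have yQD : y ^+ Q * qdet x y = c * x ^+ q + s * x.
  by rewrite -qdetC expQ_mul_qdet /c /s [x ^+ Q.+1 + _]addrC [x ^+ Q * _ + _]addrC.
have Dq := qdet_fixed xG yG.
have sq : s ^+ q = s.
  have [/subr0_eq s21 /subr0_eq s20] := comb_eq0_qdet
    (frob_coef_comb_eq0 xG yG Dq cq xQD) (frob_coef_comb_eq0 yG xG Dq cq yQD) D_neq0.
  by rewrite -s21 s20.
have divq (z : F) : z ^+ q = z -> (z / qdet x y) ^+ q = z / qdet x y.
  by move=> zq; rewrite exprMn exprVn zq Dq.
have xQ : x ^+ Q = c / qdet x y * y ^+ q + s / qdet x y * y.
  by apply: (mulIf D_neq0); rewrite xQD; field.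
have yQ : y ^+ Q = c / qdet x y * x ^+ q + s / qdet x y * x.
  by apply: (mulIf D_neq0); rewrite yQD; field.
have [al [be [alq beq]]] := expQn_comb xG yG (divq _ cq) (divq _ sq) xQ yQ j.
rewrite j_odd !expQj => def_x def_y.
by move: D_neq0; rewrite (qdet_eq0_of_swap xG yG alq beq def_x def_y) eqxx.
Qed.

End CharTwo.

Lemma expf_card_expn (F : finFieldType) m (a : F) : a ^+ (#|F| ^ m) = a.
Proof. by elim: m => [|m IHm]; rewrite ?expr1 // expnSr exprM IHm expf_card. Qed.

Lemma finField_prim_root_exists (F : finFieldType) : exists z : F, (#|F|.-1).-primitive_root z.
Proof.
have F1_gt0 : (0 < #|F|.-1)%N by rewrite -subn1 subn_gt0 finNzRing_gt1.
have units_unity : all (#|F|.-1).-unity_root (enum (predC1 (0 : F))).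
  apply/allP => x; rewrite mem_enum /= unity_rootE => x_neq0.
  by apply/eqP/(mulIf x_neq0); rewrite mul1r -exprSr prednK ?expf_card // ltnW ?finNzRing_gt1.
have [|z _ z_prim] := hasP (cyclic.has_prim_root F1_gt0 units_unity (enum_uniq _) _).
  by rewrite -cardE cardC1.
by exists z.
Qed.

Lemma Gamma_pchar2 (F : finFieldType) q (x : F) : 2 \in [pchar F] ->
  (x \in Gamma F q) = (x ^+ q ^+ q == x ^+ q + x).
Proof. by move=> F2; rewrite inE -[_ == _ + x]subr_eq0 (oppr_pchar2 F2) addrA -exprM mulnn. Qed.

Section GammaFinField.

Variables (F : finFieldType) (q : nat).
Hypotheses (qF : [pchar F].-nat q) (q_gt1 : (1 < q)%N) (cardF : #|F| = (q ^ 3)%N).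

Lemma sub_expr_in_Gamma (u : F) : u ^+ q - u \in Gamma F q.
Proof.
rewrite inE !exprBn_pchar ?pnatX ?qF // -!exprM mulnn -expnS -cardF expf_card.
by apply/eqP; ring.
Qed.

Lemma Gamma_scale (c x : F) : c ^+ q = c -> x \in Gamma F q -> c * x \in Gamma F q.
Proof.
by move=> cq; rewrite !inE !exprMn -mulnn !exprM !cq -!mulrDr mulf_eq0 => ->; rewrite orbT.
Qed.

Lemma Gamma_neq0 : exists2 x : F, x \in Gamma F q & x != 0.
Proof.
have [z z_prim] := finField_prim_root_exists F.
exists (z ^+ q - z); first exact: sub_expr_in_Gamma.
rewrite subr_eq0; apply/eqP => zq.
have q_gt0 := ltnW q_gt1.
have F1_gt0 : (0 < #|F|.-1)%N by rewrite -subn1 subn_gt0 finNzRing_gt1.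
have z_neq0 : z != 0 by rewrite (prim_root_eq0 z_prim) -lt0n.
have : (#|F|.-1 %| q.-1)%N.
  by rewrite (prim_order_dvd z_prim); apply/eqP/(mulIf z_neq0); rewrite mul1r -exprSr prednK.
move/dvdn_leq; rewrite cardF -subn1 subn_gt0 => /(_ q_gt1).
have : (q < q ^ 3)%N by rewrite -{1}(expn1 q) ltn_exp2l.
lia.
Qed.

Lemma Gamma_not_inj Q : gcdn (q - 1) (Q + 1) != 1%N ->
  ~ {in Gamma F q &, injective (fun x : F => x ^+ (q * (Q + 1)) - x ^+ (Q + 1))}.
Proof.
set g := gcdn _ _ => g_neq1 f_inj.
have [z z_prim] := finField_prim_root_exists F.
have /(dvdn_prim_root z_prim) zt_prim : (g %| #|F|.-1)%N.
  by rewrite (dvdn_trans (dvdn_gcdl _ _)) // cardF subn1 (dvdn_pred_predX q 3).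
set zt := z ^+ _ in zt_prim.
have ztQ : zt ^+ (Q + 1) = 1 by apply/eqP; rewrite -(prim_order_dvd zt_prim) dvdn_gcdr.
have ztq : zt ^+ q = zt.
  have ztq1 : zt ^+ (q - 1) = 1 by apply/eqP; rewrite -(prim_order_dvd zt_prim) dvdn_gcdl.
  by rewrite -(subnK (ltnW q_gt1)) exprD ztq1 mul1r.
have zt_neq1 : zt != 1.
  by apply: contra g_neq1 => /eqP zt1; rewrite -dvdn1 (prim_order_dvd zt_prim) zt1 expr1n.
have [x x_in x_neq0] := Gamma_neq0.
suff /(mulIf x_neq0) zt1 : zt * x = 1 * x by rewrite zt1 eqxx in zt_neq1.
rewrite mul1r; apply: (f_inj _ _ (Gamma_scale ztq x_in) x_in).
by rewrite !exprMn exprM ztq ztQ !mul1r.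
Qed.

End GammaFinField.

Unset Implicit Arguments.

Theorem theorem1p6 (p k l : nat) (F : finFieldType) :
  prime p -> (0 < k)%N -> #|F| = ((p ^ k) ^ 3)%N ->
  let q := (p ^ k)%N in
  let Q := (p ^ l)%N in
  (permutes_set (fun x : F => x ^+ (q * (Q + 1)) - x ^+ (Q + 1)) (Gamma F q)
     <-> gcdn (q - 1) (Q + 1) = 1%N)
  /\ (gcdn (q - 1) (Q + 1) = 1%N <-> (p = 2%N /\ ole (ord2 k) (ord2 l))).
Proof.
move=> p_pr k_gt0 cardF q Q.
have pF : p \in [pchar F] by apply: (card_finPcharP (n := (k * 3)%N)); rewrite // cardF expnM.
have qF : [pchar F].-nat q := pchar_nat_expn k pF.
have q_gt1 : (1 < q)%N by rewrite -(expn0 p) ltn_exp2l ?prime_gt1.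
have arith := gcdn_pred_expn_succ_eq1 l p_pr k_gt0.
split=> //; split=> [[_ f_inj] | g1].
  by apply/eqP; apply: contraT => /(Gamma_not_inj qF q_gt1 cardF)/(_ f_inj).
have [p2 le_kl] := arith.1 g1.
have F2 : 2 \in [pchar F] by move: pF; rewrite p2.
have [j j_odd /dvdnP[m def_lj]] := odd_cofactor_dvdn k_gt0 le_kl.
have expq3 (a : F) : a ^+ (q ^ 3) = a by rewrite -cardF expf_card.
have expQ3j (a : F) : a ^+ (Q ^ (3 * j)) = a.
  by rewrite -[in RHS](expf_card_expn m a) cardF -!expnM mulnCA def_lj [in RHS]mulnC mulnA.
have j3_odd : odd (3 * j) by rewrite oddM j_odd.
split=> [x _ | x y]; first by rewrite mulnC exprM sub_expr_in_Gamma.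
rewrite !Gamma_pchar2 // addn1 => /eqP xG /eqP yG.
exact: (Gamma_expSQ_inj F2 qF (pchar_nat_expn l pF) expq3 j3_odd expQ3j xG yG).
Qed.
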